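(* For every graph $G$ on $m\ge 3$ vertices, $\lambda_2\ge d_3$, where $\lambda_2$ is the second largest eigenvalue of the Laplacian matrix $L(G)$ and $d_3$ is the third largest vertex degree of $G$.
   Context: All graphs are finite, simple, unweighted and undirected. $L(G)=D(G)-A(G)$ with $A(G)$ the adjacency matrix and $D(G)$ the diagonal matrix of degrees. Laplacian eigenvalues $\lambda_1\ge\lambda_2\ge\cdots$ and degrees $d_1\ge d_2\ge\cdots$ are listed in nonincreasing order with multiplicity. *)

From HB Require Import structures.
From mathcomp Require Import all_boot all_order all_algebra all_field.
Set Implicit Arguments. Unset Strict Implicit. Unset Printing Implicit Defensive.
Import Order.TTheory GRing.Theory Num.Theory.

Definition simple_graph (m : nat) (e : rel 'I_m) : Prop :=
  symmetric e /\ irreflexive e.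

Definition deg (m : nat) (e : rel 'I_m) (i : 'I_m) : nat := #|[set j | e i j]|.

Definition degree_seq (m : nat) (e : rel 'I_m) : seq nat :=
  sort geq [seq deg e i | i <- enum 'I_m].

(* k-th largest degree, 1-based: d_k *)
Definition dk (m : nat) (e : rel 'I_m) (k : nat) : nat := nth 0%N (degree_seq e) k.-1.

Local Open Scope ring_scope.

Definition laplacian (m : nat) (e : rel 'I_m) : 'M[algC]_m :=
  \matrix_(i, j) ((deg e i)%:R *+ (i == j) - (e i j)%:R).

(* s is the list of Laplacian eigenvalues with multiplicity (the roots of the
   characteristic polynomial), in nonincreasing order *)
Definition laplacian_spectrum (m : nat) (e : rel 'I_m) (s : seq algC) : Prop :=
  char_poly (laplacian e) = \prod_(x <- s) ('X - x%:P) /\ sorted (fun x y => y <= x) s.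

From HB Require Import structures.
From mathcomp Require Import all_boot all_order all_algebra all_field.
From mathcomp Require Import ring.
Import Order.TTheory GRing.Theory Num.Theory.
Local Open Scope ring_scope.
Local Open Scope sesquilinear_scope.
Set Implicit Arguments. Unset Strict Implicit. Unset Printing Implicit Defensive.

(* The proof is a two-dimensional instance of the Courant-Fischer principle.
   Diagonalise the Hermitian Laplacian unitarily, L = P^* diag(D) P; the entries
   of D are the eigenvalues, a permutation of the sorted spectrum s.  If the
   quadratic form x L x^* is at least d |x|^2 on a two-dimensional space, then
   at least two entries of D are >= d: otherwise some nonzero x in that space
   has its P-coordinate vanishing on the unique large entry, and its Rayleigh
   quotient is < d.  Two eigenvalues >= d in a nonincreasing list give s_1 >= d.

   To produce the space, pick three distinct vertices u, v, w of degree >= d_3.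
   If two of them, say u and v, are non-adjacent, the span of e_u and e_v works
   since x L x^* = deg u |x_u|^2 + deg v |x_v|^2 there.  Otherwise u, v, w form
   a triangle and the span of e_u - e_v and e_v - e_w (vectors supported on the
   triangle with zero sum) works. *)

Definition sqnorm n (x : 'rV[algC]_n) : algC := (x *m x ^t*) 0 0.

Definition qform n (A : 'M[algC]_n) (x : 'rV[algC]_n) : algC := (x *m A *m x ^t*) 0 0.

Definition independent2 n (a b : 'rV[algC]_n) : Prop :=
  forall al be, al *: a + be *: b = 0 -> al = 0 /\ be = 0.

Definition rayleigh_bound n (A : 'M[algC]_n) (d : algC) (a b : 'rV[algC]_n) : Prop :=
  forall al be, d * sqnorm (al *: a + be *: b) <= qform A (al *: a + be *: b).

Lemma card_count (T : finType) (A : {pred T}) : #|A| = count A (enum T).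
Proof. by rewrite cardE -size_filter /enum_mem filter_predT. Qed.

Lemma card_le1_all_but_one (T : finType) (A : {pred T}) (t0 : T) :
  (#|A| <= 1)%N -> exists k, forall j, j != k -> j \notin A.
Proof.
move=> /card_le1_eqP A_small; case: (pickP A) => [k Ak | A0].
  by exists k => j; apply: contra => Aj; apply/eqP; apply: A_small.
by exists t0 => j _; rewrite unfold_in A0.
Qed.

Lemma sqnorm_sum n (x : 'rV[algC]_n) : sqnorm x = \sum_j x 0 j * (x 0 j)^*.
Proof. by rewrite /sqnorm mxE; apply: eq_bigr => j _; rewrite !mxE. Qed.

Lemma pencil_coordinate_zero (F : fieldType) n (a b : 'rV[F]_n) (k : 'I_n) :
  exists al be, ~ (al = 0 /\ be = 0) /\ (al *: a + be *: b) 0 k = 0.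
Proof.
have [a0 | a_neq0] := eqVneq (a 0 k) 0.
  by exists 1, 0; split=> [[/eqP]|]; rewrite ?oner_eq0 // !mxE a0 mulr0 mul0r addr0.
exists (b 0 k), (- a 0 k); split=> [[_ /eqP]|]; first by rewrite oppr_eq0 (negPf a_neq0).
by rewrite !mxE mulNr mulrC subrr.
Qed.

Section UnitaryDiagonal.
Variables (n : nat) (P : 'M[algC]_n) (D : 'rV[algC]_n).
Hypothesis P_unitary : P \is unitarymx.

Lemma sqnorm_unitary (y : 'rV[algC]_n) : sqnorm (y *m P) = sqnorm y.
Proof.
by rewrite /sqnorm trmx_mul map_mxM mulmxA -[y *m P *m _]mulmxA (unitarymxP P_unitary) mulmx1.
Qed.

Lemma qform_conj_diag (y : 'rV[algC]_n) :
  qform (P ^t* *m diag_mx D *m P) (y *m P) = \sum_j D 0 j * (y 0 j * (y 0 j)^*).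
Proof.
rewrite /qform trmx_mul map_mxM !mulmxA.
rewrite !(mulmxtVK _ P_unitary) mxE; apply: eq_bigr => j _.
by rewrite mul_mx_diag !mxE; ring.
Qed.

Lemma qform_conj_diag_lt (d : algC) (y : 'rV[algC]_n) :
  y != 0 -> (forall j, y 0 j != 0 -> D 0 j < d) ->
  qform (P ^t* *m diag_mx D *m P) (y *m P) < d * sqnorm (y *m P).
Proof.
move=> /rV0Pn[j0 yj0] Dlt.
rewrite qform_conj_diag sqnorm_unitary sqnorm_sum mulr_sumr -subr_gt0 -sumrB.
rewrite (bigD1 j0) //= ltr_pwDl //.
  by rewrite -mulrBl mulr_gt0 ?subr_gt0 ?Dlt // lt_def mul_conjC_ge0 mul_conjC_eq0 yj0.
apply: sumr_ge0 => j _; rewrite -mulrBl.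
have [->|/Dlt/ltW] := eqVneq (y 0 j) 0; first by rewrite mul0r mulr0.
by rewrite -subr_ge0 => Dle; rewrite mulr_ge0 ?mul_conjC_ge0.
Qed.

Definition entries_at_least (d : algC) : {pred 'I_n} := [pred j | d <= D 0 j].

Lemma two_large_diagonal_entries (d : algC) (a b : 'rV[algC]_n) :
  D \is a realmx -> d \is Num.real -> independent2 a b ->
  rayleigh_bound (P ^t* *m diag_mx D *m P) d a b ->
  (1 < #|entries_at_least d|)%N.
Proof.
move=> /mxOverP Dreal dreal indep bound; rewrite ltnNge; apply/negP => few.
have a_neq0 : a != 0.
  apply/eqP => a0; have [|/eqP] := indep 1 0; last by rewrite oner_eq0.
  by rewrite a0 scaler0 scale0r addr0.
have /rV0Pn[t0 _] := a_neq0.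
have [k small_k] := card_le1_all_but_one t0 few.
have Dlt j : j != k -> D 0 j < d.
  by move=> /small_k; rewrite (real_ltNge (Dreal 0 j) dreal).
have [al [be [nontriv yk]]] := pencil_coordinate_zero (a *m P ^t*) (b *m P ^t*) k.
set x := al *: a + be *: b.
have yE : x *m P ^t* = al *: (a *m P ^t*) + be *: (b *m P ^t*).
  by rewrite mulmxDl -!scalemxAl.
have x_neq0 : x != 0 by apply/eqP => /indep/nontriv.
have y_neq0 : x *m P ^t* != 0.
  by apply: contraNneq x_neq0 => y0; rewrite -(mulmxKtV x P_unitary) // y0 mul0mx.
have y_support j : (x *m P ^t*) 0 j != 0 -> D 0 j < d.
  by have [->|/Dlt] := eqVneq j k; first rewrite yE yk eqxx.
have := qform_conj_diag_lt y_neq0 y_support; rewrite mulmxKtV //.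
by move=> /lt_le_trans/(_ (bound al be)); rewrite ltxx.
Qed.
End UnitaryDiagonal.

Lemma sorted_second_ge disp (T : porderType disp) (x0 x : T) (s : seq T) :
  sorted (fun a b => (b <= a)%O) s -> (1 < count (fun y => (x <= y)%O) s)%N ->
  (x <= nth x0 s 1)%O.
Proof.
case: s => [|y0 [|y1 r]] //=; first by case: (x <= y0)%O.
move=> /andP[_ path_r].
case: (boolP (x <= y1)%O) => //= not_le_y1; rewrite add0n.
have /allP below_y1 := order_path_min (fun a b c ba cb => le_trans cb ba) path_r.
move=> count_large; have : (0 < count (>= x)%O r)%N.
  by case: (x <= y0)%O count_large; rewrite ?add1n ?add0n // => /ltnW.
rewrite -has_count => /hasP[y y_r x_le_y].
by rewrite (le_trans x_le_y (below_y1 y y_r)) in not_le_y1.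
Qed.

Lemma char_poly_conjmx n (A P : 'M[algC]_n) : P \in unitmx ->
  char_poly (invmx P *m A *m P) = char_poly A.
Proof.
move=> Pu; rewrite /char_poly /char_poly_mx.
have -> : 'X%:M - map_mx polyC (invmx P *m A *m P) =
   map_mx polyC (invmx P) *m ('X%:M - map_mx polyC A) *m map_mx polyC P.
  rewrite mulmxBr mulmxBl !map_mxM; congr (_ - _).
  by rewrite scalar_mxC -mulmxA -map_mxM mulVmx // map_mx1 mulmx1.
rewrite !det_mulmx !det_map_mx mulrAC -mulrA mulrA /= -polyCM -det_mulmx mulVmx //.
by rewrite det1 mul1r.
Qed.

Lemma hermitian_spectrum n (A : 'M[algC]_n) (s : seq algC) :
  A \is hermsymmx -> char_poly A = \prod_(x <- s) ('X - x%:P) ->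
  exists P D, [/\ P \is unitarymx, A = P ^t* *m diag_mx D *m P, D \is a realmx
                & perm_eq s [seq D 0 j | j <- enum 'I_n]].
Proof.
move=> A_herm charA; pose P := spectralmx A; pose D := spectral_diag A.
have /orthomx_spectralP A_spec := hermitian_normalmx A_herm.
exists P, D; split; first exact: spectral_unitarymx.
- by rewrite {1}A_spec invmx_unitary ?spectral_unitarymx.
- exact: hermitian_spectral_diag_real.
apply: prod_XsubC_eq; rewrite -charA {1}A_spec char_poly_conjmx ?spectral_unit //.
rewrite char_poly_trig ?diag_mx_is_trig // big_map big_enum /=.
by apply: eq_bigr => j _; rewrite mxE eqxx mulr1n.
Qed.

Lemma three_vertices m (e : rel 'I_m) : (3 <= m)%N ->
  exists u v w, [/\ u != v, v != w & w != u] /\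
    [/\ (dk e 3 <= deg e u)%N, (dk e 3 <= deg e v)%N & (dk e 3 <= deg e w)%N].
Proof.
move=> m3; pose large n := (dk e 3 <= n)%N.
have size_ds : size (degree_seq e) = m.
  by rewrite /degree_seq size_sort size_map size_enum_ord.
have sorted_ds : sorted geq (degree_seq e).
  by apply: sort_sorted => x y; exact: leq_total.
have top3 i : (i <= 2)%N -> large (nth 0%N (degree_seq e) i).
  move=> i_le2; apply: (sorted_leq_nth (leT := geq)) => //.
  - by move=> x y z yx zy; apply: leq_trans zy yx.
  - exact: leqnn.
  - by rewrite inE size_ds (leq_ltn_trans i_le2).
  - by rewrite inE size_ds.
have : (2 < count large (degree_seq e))%N.
  move: (top3 0%N isT) (top3 1%N isT) (top3 2%N isT) size_ds.
  case: (degree_seq e) => [|a0 [|a1 [|a2 r]]] /=; try by move=> _ _ _ sz; rewrite -sz in m3.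
  by move=> -> -> ->.
rewrite /degree_seq count_sort count_map -card_count.
case/card_gt2P => u [v [w [[lu lv lw] [uv vw wu]]]].
by exists u, v, w.
Qed.

Section LaplacianForm.
Variables (m : nat) (e : rel 'I_m).
Hypothesis e_simple : simple_graph e.

Lemma laplacian_hermitian : laplacian e \is hermsymmx.
Proof.
have [e_sym _] := e_simple; apply/is_hermitianmxP; rewrite expr0 scale1r.
apply/matrixP => i j; rewrite !mxE rmorphB /= rmorphMn /= !conjC_nat e_sym eq_sym.
by have [->|] := eqVneq j i.
Qed.

Lemma laplacian_qform (x : 'rV[algC]_m) :
  qform (laplacian e) x = \sum_i (deg e i)%:R * (x 0 i * (x 0 i)^*) -
                          \sum_i \sum_j (e i j)%:R * (x 0 i * (x 0 j)^*).
Proof.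
rewrite /qform mxE.
under eq_bigr => j _ do rewrite !mxE big_distrl /=.
rewrite exchange_big /= -sumrB; apply: eq_bigr => i _.
rewrite (eq_bigr (fun j => (deg e i)%:R *+ (i == j) * (x 0 i * (x 0 j)^*) -
                          (e i j)%:R * (x 0 i * (x 0 j)^*))); last first.
  by move=> j _; rewrite !mxE; ring.
rewrite sumrB (bigD1 i) //= eqxx mulr1n big1 ?addr0 // => j /negbTE.
by rewrite eq_sym => ->; rewrite mulr0n mul0r.
Qed.

(* If x is supported on a vertex set T that is a clique (complete = true) or
   an independent set (complete = false), the edge part of the form only
   depends on the coordinate sum and the squared norm of x. *)
Lemma edge_sum_on_support (x : 'rV[algC]_m) (T : pred 'I_m) (complete : bool) :
  (forall i, x 0 i != 0 -> T i) ->
  (forall i j, T i -> T j -> e i j = complete && (i != j)) ->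
  \sum_i \sum_j (e i j)%:R * (x 0 i * (x 0 j)^*) =
  complete%:R * ((\sum_i x 0 i) * (\sum_i x 0 i)^* - \sum_i x 0 i * (x 0 i)^*).
Proof.
move=> x_supp e_on_T.
have edge_term i j : (e i j)%:R * (x 0 i * (x 0 j)^*) =
    complete%:R * (x 0 i * (x 0 j)^* - (i == j)%:R * (x 0 i * (x 0 j)^*)).
  have [-> | /x_supp Ti] := eqVneq (x 0 i) 0; first by rewrite !mul0r !mulr0 subrr mulr0.
  have [-> | /x_supp Tj] := eqVneq (x 0 j) 0; first by rewrite conjC0 !mulr0 subrr mulr0.
  by rewrite (e_on_T _ _ Ti Tj); case: (complete); case: eqVneq => _ /=;
    rewrite ?mul0r ?mul1r ?subrr ?subr0.
have square_sum : (\sum_i x 0 i) * (\sum_i x 0 i)^* = \sum_i \sum_j x 0 i * (x 0 j)^*.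
  by rewrite rmorph_sum big_distrl; apply: eq_bigr => i _; rewrite big_distrr.
have diagonal i : \sum_j (i == j)%:R * (x 0 i * (x 0 j)^*) = x 0 i * (x 0 i)^*.
  rewrite (bigD1 i) //= eqxx mul1r big1 ?addr0 // => j /negbTE.
  by rewrite eq_sym => ->; rewrite mul0r.
rewrite square_sum -sumrB mulr_sumr; apply: eq_bigr => i _.
rewrite -diagonal -sumrB mulr_sumr; apply: eq_bigr => j _; exact: edge_term.
Qed.

Lemma laplacian_qform_ge (x : 'rV[algC]_m) (d : nat) (T : pred 'I_m) (complete : bool) :
  (forall i, x 0 i != 0 -> T i) ->
  (forall i j, T i -> T j -> e i j = complete && (i != j)) ->
  (forall i, T i -> (d <= deg e i)%N) -> (complete -> \sum_i x 0 i = 0) ->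
  d%:R * sqnorm x <= qform (laplacian e) x.
Proof.
move=> x_supp e_on_T deg_T sum0.
rewrite laplacian_qform (edge_sum_on_support x_supp e_on_T) sqnorm_sum mulr_sumr.
have deg_bound : \sum_i d%:R * (x 0 i * (x 0 i)^*) <=
                 \sum_i (deg e i)%:R * (x 0 i * (x 0 i)^*).
  apply: ler_sum => i _; have [-> | /x_supp Ti] := eqVneq (x 0 i) 0.
    by rewrite !mul0r !mulr0.
  by rewrite -subr_ge0 -mulrBl mulr_ge0 ?mul_conjC_ge0 // subr_ge0 ler_nat deg_T.
apply: (le_trans deg_bound); case: (complete) sum0 => /= [-> // | _].
  rewrite conjC0 mul0r sub0r mulrN opprK mul1r lerDl.
  by apply: sumr_ge0 => i _; rewrite mul_conjC_ge0.
by rewrite mul0r subr0.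
Qed.

Lemma nonadjacent_pencil (u v : 'I_m) (d : nat) :
  u != v -> ~~ e u v -> (d <= deg e u)%N -> (d <= deg e v)%N ->
  independent2 'e_u 'e_v /\ rayleigh_bound (laplacian e) d%:R 'e_u 'e_v.
Proof.
have [e_sym e_irr] := e_simple; move=> uv not_euv du dv; split.
  move=> al be /rowP coords; move: (coords u) (coords v); rewrite !mxE !eqxx.
  by rewrite (negbTE uv) eq_sym (negbTE uv) /= !mulr1 !mulr0 addr0 add0r => -> ->.
move=> al be.
apply: (laplacian_qform_ge (T := [pred i | (i == u) || (i == v)]) (complete := false)) => //.
- move=> i; rewrite !mxE /=; apply: contraR; rewrite negb_or => /andP[/negbTE -> /negbTE ->].
  by rewrite !mulr0 addr0.
- move=> i j /orP[] /eqP -> /orP[] /eqP ->; rewrite ?e_irr //=; first exact/negbTE.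
  by rewrite e_sym; apply/negbTE.
- by move=> i /orP[] /eqP ->.
Qed.

Lemma sum_indicator (u : 'I_m) : \sum_i ((i == u)%:R : algC) = 1.
Proof. by rewrite (bigD1 u) //= eqxx big1 ?addr0 // => i /negbTE ->. Qed.

Lemma triangle_pencil (u v w : 'I_m) (d : nat) :
  u != v -> v != w -> w != u -> e u v -> e v w -> e w u ->
  (d <= deg e u)%N -> (d <= deg e v)%N -> (d <= deg e w)%N ->
  independent2 ('e_u - 'e_v) ('e_v - 'e_w) /\
  rayleigh_bound (laplacian e) d%:R ('e_u - 'e_v) ('e_v - 'e_w).
Proof.
have [e_sym e_irr] := e_simple.
move=> uv vw wu euv evw ewu du dv dw.
have vu : v != u by rewrite eq_sym.
have wv : w != v by rewrite eq_sym.
have uw : u != w by rewrite eq_sym.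
have evu : e v u by rewrite e_sym.
have ewv : e w v by rewrite e_sym.
have euw : e u w by rewrite e_sym.
split.
  move=> al be /rowP coords; move: (coords u) (coords w); rewrite !mxE !eqxx.
  rewrite (negbTE uv) (negbTE uw) (negbTE wu) (negbTE wv) /=.
  rewrite ?mulr0n ?mulr1n ?subr0 ?sub0r ?mulr0 ?mulr1 ?addr0 ?add0r ?mulrN1 => -> /eqP.
  by rewrite oppr_eq0 => /eqP ->.
move=> al be.
apply: (laplacian_qform_ge (T := [pred i | [|| i == u, i == v | i == w]]) (complete := true)).
- move=> i; rewrite !mxE /=; apply: contraR.
  rewrite !negb_or => /and3P[/negbTE -> /negbTE -> /negbTE ->].
  by rewrite !subrr !mulr0 addr0.
- move=> i j /or3P[] /eqP -> /or3P[] /eqP ->;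
    by rewrite ?e_irr ?eqxx ?euv ?evu ?evw ?ewv ?ewu ?euw ?uv ?vu ?vw ?wv ?wu ?uw.
- by move=> i /or3P[] /eqP ->.
- move=> _; under eq_bigr => i _ do rewrite !mxE /=.
  by rewrite big_split /= -!mulr_sumr !sumrB !sum_indicator !subrr !mulr0 addr0.
Qed.

Lemma high_degree_pencil (u v w : 'I_m) (d : nat) :
  u != v -> v != w -> w != u ->
  (d <= deg e u)%N -> (d <= deg e v)%N -> (d <= deg e w)%N ->
  exists a b, independent2 a b /\ rayleigh_bound (laplacian e) d%:R a b.
Proof.
move=> uv vw wu du dv dw.
case euv: (e u v); last by exists 'e_u, 'e_v; apply: nonadjacent_pencil; rewrite ?euv.
case evw: (e v w); last by exists 'e_v, 'e_w; apply: nonadjacent_pencil; rewrite ?evw.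
case ewu: (e w u); last by exists 'e_w, 'e_u; apply: nonadjacent_pencil; rewrite ?ewu.
by exists ('e_u - 'e_v), ('e_v - 'e_w); apply: triangle_pencil.
Qed.
End LaplacianForm.

Theorem mainTheorem14 (m : nat) (e : rel 'I_m) (s : seq algC) :
  (3 <= m)%N -> simple_graph e -> laplacian_spectrum e s ->
  (dk e 3)%:R <= s`_1.
Proof.
move=> m3 e_simple [char_s sorted_s].
have [P [D [P_unitary L_diag D_real s_perm]]] :=
  hermitian_spectrum (laplacian_hermitian e_simple) char_s.
have [u [v [w [[uv vw wu] [du dv dw]]]]] := three_vertices e m3.
have [a [b [indep bound]]] := high_degree_pencil e_simple uv vw wu du dv dw.
apply: sorted_second_ge sorted_s _.
rewrite (permP s_perm) count_map -card_count.
rewrite L_diag in bound.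
have := two_large_diagonal_entries P_unitary D_real (realn _ _) indep bound.
by rewrite /entries_at_least.
Qed.
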